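(* Let $\tilde{\boldsymbol x}\in L^2(\Omega,\mathbb R^m)$, $\tilde{\boldsymbol y}\in L^2(\Omega,\mathbb R^n)$ be zero-mean, and let $\tilde{\boldsymbol v}_1=\tilde{\boldsymbol y},\tilde{\boldsymbol v}_2,\ldots,\tilde{\boldsymbol v}_p\in L^2(\Omega,\mathbb R^n)$ be zero-mean and pairwise orthogonal ($E[\tilde{\boldsymbol v}_i\tilde{\boldsymbol v}_j^T]=\mathbb O$ for $i\neq j$). Let $\eta_1,\ldots,\eta_p$ be nonnegative integers with $\sum\eta_k\le\min\{m,n\}$. For each $k$ let $\beta_{k1}\ge\beta_{k2}\ge\cdots\ge0$ be the singular values of $E_{\tilde x\tilde v_k}(E_{\tilde v_k\tilde v_k}^{1/2})^\dagger$ and $G_{k\eta_k}$ the rank-$\le\eta_k$ truncation of its SVD (keeping the $\eta_k$ largest singular values). Let $\mathcal T_p^*(\tilde{\boldsymbol y})=\sum_{k=1}^pG_{k\eta_k}(E_{\tilde v_k\tilde v_k}^{1/2})^\dagger\tilde{\boldsymbol v}_k$, and let the Karhunen–Loève transform of rank $\eta_1$ be $\mathcal T_{\rm KLT}(\tilde{\boldsymbol y})=G_{1\eta_1}(E_{\tilde y\tilde y}^{1/2})^\dagger\tilde{\boldsymbol y}$ (the case $p=1$). Then $$E\big[\|\tilde{\boldsymbol x}-\mathcal T_p^*(\tilde{\boldsymbol y})\|^2\big]=E\big[\|\tilde{\boldsymbol x}-\mathcal T_{\rm KLT}(\tilde{\boldsymbol y})\|^2\big]-\sum_{k=2}^p\sum_{j=1}^{\eta_k}\beta_{kj}^2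 .$$
   Context: $E[\cdot]$ denotes expectation on a probability space $(\Omega,\Sigma,\mu)$; $E_{gh}:=E[\boldsymbol g\boldsymbol h^T]$ for random vectors $\boldsymbol g,\boldsymbol h$. $M^\dagger$ is the Moore–Penrose pseudo-inverse and $M^{1/2}$ the symmetric PSD square root. For vectors $\|\cdot\|$ is the Euclidean norm, for matrices the Frobenius norm. Matrices act on random vectors pointwise in $\omega$. *)

From HB Require Import structures.
From mathcomp Require Import all_boot all_order all_algebra.
From mathcomp Require Import all_classical all_reals all_analysis.
Set Implicit Arguments. Unset Strict Implicit. Unset Printing Implicit Defensive.
Import Order.TTheory GRing.Theory Num.Theory.
Local Open Scope ring_scope.

Section Defs.
Context {d : measure_display} {T : measurableType d} {R : realType}.
Variable P : probability T R.

Definition Ex (f : T -> R) : R := fine ('E_P[f])%E.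

Definition L2vec n (f : T -> 'cV[R]_n) : Prop :=
  forall i : 'I_n, (fun w => f w i 0) \in Lfun P 2%:E.

Definition zero_mean n (f : T -> 'cV[R]_n) : Prop :=
  forall i : 'I_n, Ex (fun w => f w i 0) = 0.

Definition Emat m n (g : T -> 'cV[R]_m) (h : T -> 'cV[R]_n) : 'M[R]_(m, n) :=
  \matrix_(i, j) Ex (fun w => g w i 0 * h w j 0).

Definition mse m (x z : T -> 'cV[R]_m) : R :=
  Ex (fun w => \sum_(i < m) (x w i 0 - z w i 0) ^+ 2).
End Defs.

Section LinAlg.
Context {R : realType}.

Definition is_psd_sqrt n (S M : 'M[R]_n) : Prop :=
  S^T = S /\ (forall u : 'cV[R]_n, 0 <= (u^T *m S *m u) 0 0) /\ S *m S = M.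

Definition is_pinv m n (A : 'M[R]_(m, n)) (B : 'M[R]_(n, m)) : Prop :=
  A *m B *m A = A /\ B *m A *m B = B /\
  (A *m B)^T = A *m B /\ (B *m A)^T = B *m A.

Definition orthogonal_mx n (U : 'M[R]_n) : Prop := U^T *m U = 1%:M.

Definition rdiag m n (s : nat -> R) : 'M[R]_(m, n) :=
  \matrix_(i, j) if (i == j :> nat) then s (i : nat) else 0.

Definition is_svd m n (A : 'M[R]_(m, n)) (U : 'M[R]_m) (s : nat -> R)
    (V : 'M[R]_n) : Prop :=
  orthogonal_mx U /\ orthogonal_mx V /\
  (forall i, (i < minn m n)%N -> 0 <= s i) /\
  (forall i j, (i <= j)%N -> (j < minn m n)%N -> s j <= s i) /\
  A = U *m rdiag m n s *m V^T.

Definition svd_trunc m n (U : 'M[R]_m) (s : nat -> R) (V : 'M[R]_n)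
    (eta : nat) : 'M[R]_(m, n) :=
  U *m rdiag m n (fun i => if (i < eta)%N then s i else 0) *m V^T.
End LinAlg.

From HB Require Import structures.
From mathcomp Require Import all_boot all_order all_algebra.
From mathcomp Require Import all_classical all_reals all_analysis.
Import Order.TTheory GRing.Theory Num.Theory.
From mathcomp Require Import lra.
Set Implicit Arguments.
Unset Strict Implicit.
Unset Printing Implicit Defensive.
Local Open Scope ring_scope.

(* Expanding the quadratic error, the orthogonality of the [v k] kills every cross
   moment, so E||x - sum_k M_k v_k||^2 = tr E_xx + sum_k (tr (M_k E_kk M_k^T) -
   2 tr (E_xk M_k^T)): each branch contributes an independent term.  For
   M_k = G_k S_k^+ the Penrose identities reduce the k-th term to
   tr (G G^T) - 2 tr (G A^T) with A = E_xk S_k^+, and since G is the rank-eta_k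
   truncation of an SVD of A both traces equal sum_(j < eta_k) beta_kj^2.  The KLT is
   the one-branch case, so the extra branches lower the error by exactly their
   own sums of squared singular values. *)

Lemma mxtraceB (R : pzRingType) n (A B : 'M[R]_n) : \tr (A - B) = \tr A - \tr B.
Proof. exact: raddfB. Qed.

Lemma mxtrace_sum (R : pzRingType) n (I : finType) (F : I -> 'M[R]_n) :
  \tr (\sum_i F i) = \sum_i \tr (F i).
Proof. exact: raddf_sum. Qed.

Section SecondMoments.
Context {d : measure_display} {T : measurableType d} {R : realType}.
Variable P : probability T R.

Let one_le_two : (1 <= (2%:E : \bar R))%E. Proof. by rewrite lee_fin ler1n. Qed.

Lemma Lfun_mull (q c : R) (f : T -> R) : 1 <= q -> f \in Lfun P q%:E ->
  (fun w => c * f w) \in Lfun P q%:E.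
Proof.
move=> q1 hf; have -> : (fun w => c * f w) = c \o* f by apply/funext => w /=; rewrite mulrC.
exact: Lfun_scale.
Qed.

Lemma ExD (f g : T -> R) : f \in Lfun P 1 -> g \in Lfun P 1 ->
  Ex P (fun w => f w + g w) = Ex P f + Ex P g.
Proof.
move=> hf hg; rewrite /Ex (expectationD hf hg) fineD //; exact: expectation_fin_num.
Qed.

Lemma ExZl (c : R) (f : T -> R) : f \in Lfun P 1 -> Ex P (fun w => c * f w) = c * Ex P f.
Proof.
move=> hf; have -> : (fun w => c * f w) = c \o* f by apply/funext => w /=; rewrite mulrC.
by rewrite /Ex expectationZl // fineM // expectation_fin_num.
Qed.

Lemma ExN (f : T -> R) : f \in Lfun P 1 -> Ex P (fun w => - f w) = - Ex P f.
Proof.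
move=> hf; rewrite -mulN1r -ExZl //; congr Ex; apply/funext => w; by rewrite mulN1r.
Qed.

Lemma Ex_sum (I : Type) (s : seq I) (F : I -> T -> R) :
  (forall i, F i \in Lfun P 1) ->
  Ex P (fun w => \sum_(i <- s) F i w) = \sum_(i <- s) Ex P (F i).
Proof.
move=> hF; elim: s => [|a s IH].
  by under eq_fun do rewrite big_nil; rewrite big_nil /Ex expectation_cst.
under eq_fun do rewrite big_cons.
rewrite big_cons ExD ?IH //.
have -> : (fun w => \sum_(i <- s) F i w) = \sum_(i <- s) F i.
  by apply/funext => w; rewrite fct_sumE.
by apply: rpred_sum.
Qed.

Lemma L2vec_mulmx m n (A : 'M[R]_(m, n)) (g : T -> 'cV[R]_n) :
  L2vec P g -> L2vec P (fun w => A *m g w).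
Proof.
move=> hg i.
have -> : (fun w => (A *m g w) i 0) = \sum_j (fun w => A i j * g w j 0).
  by apply/funext => w; rewrite mxE fct_sumE.
by apply: rpred_sum => j _; apply: Lfun_mull; rewrite ?ler1n.
Qed.

Lemma L2vec_sum n (I : finType) (g : I -> T -> 'cV[R]_n) :
  (forall k, L2vec P (g k)) -> L2vec P (fun w => \sum_k g k w).
Proof.
move=> hg i; have -> : (fun w => (\sum_k g k w) i 0) = \sum_k (fun w => g k w i 0).
  by apply/funext => w; rewrite summxE fct_sumE.
by apply: rpred_sum => k _; apply: hg.
Qed.

Lemma L2vec_sub n (g h : T -> 'cV[R]_n) :
  L2vec P g -> L2vec P h -> L2vec P (fun w => g w - h w).
Proof.
move=> hg hh i; have -> : (fun w => (g w - h w) i 0) = (fun w => g w i 0) - (fun w => h w i 0).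
  by apply/funext => w; rewrite !mxE.
exact: rpredB.
Qed.

Lemma Emat_trC m n (g : T -> 'cV[R]_m) (h : T -> 'cV[R]_n) :
  Emat P g h = (Emat P h g)^T.
Proof.
by apply/matrixP => i j; rewrite !mxE; congr Ex; apply/funext => w; rewrite mulrC.
Qed.

Section Bilinearity.
Variables m n : nat.
Variable h : T -> 'cV[R]_n.
Hypothesis h2 : L2vec P h.

Let L1_mul (g : T -> 'cV[R]_m) i j : L2vec P g -> (fun w => g w i 0 * h w j 0) \in Lfun P 1.
Proof. by move=> g2; apply: Lfun2_mul_Lfun1. Qed.

Lemma Emat_mulmxl k (A : 'M[R]_(k, m)) (g : T -> 'cV[R]_m) :
  L2vec P g -> Emat P (fun w => A *m g w) h = A *m Emat P g h.
Proof.
move=> g2; apply/matrixP => i j; rewrite !mxE.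
have -> : (fun w => (A *m g w) i 0 * h w j 0) =
          (fun w => \sum_l A i l * (g w l 0 * h w j 0)).
  by apply/funext => w; rewrite mxE mulr_suml; apply: eq_bigr => l _; rewrite mulrA.
rewrite Ex_sum => [|l]; last by rewrite Lfun_mull ?L1_mul.
by apply: eq_bigr => l _; rewrite ExZl ?mxE ?L1_mul.
Qed.

Lemma Emat_suml (I : finType) (g : I -> T -> 'cV[R]_m) :
  (forall k, L2vec P (g k)) -> Emat P (fun w => \sum_k g k w) h = \sum_k Emat P (g k) h.
Proof.
move=> g2; apply/matrixP => i j; rewrite !mxE summxE.
have -> : (fun w => (\sum_k g k w) i 0 * h w j 0) = (fun w => \sum_k g k w i 0 * h w j 0).
  by apply/funext => w; rewrite summxE mulr_suml.
by rewrite Ex_sum => [|k]; [apply: eq_bigr => k _; rewrite mxE | apply: L1_mul].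
Qed.

Lemma Emat_subl (g1 g2 : T -> 'cV[R]_m) :
  L2vec P g1 -> L2vec P g2 ->
  Emat P (fun w => g1 w - g2 w) h = Emat P g1 h - Emat P g2 h.
Proof.
move=> g1_2 g2_2; apply/matrixP => i j; rewrite !mxE.
have -> : (fun w => (g1 w - g2 w) i 0 * h w j 0) =
          (fun w => g1 w i 0 * h w j 0 + - (g2 w i 0 * h w j 0)).
  by apply/funext => w; rewrite !mxE mulrBl.
by rewrite ExD ?ExN ?rpredN ?L1_mul.
Qed.

End Bilinearity.

Lemma Emat_mulmxr m n k (B : 'M[R]_(k, n)) (g : T -> 'cV[R]_m) (h : T -> 'cV[R]_n) :
  L2vec P g -> L2vec P h -> Emat P g (fun w => B *m h w) = Emat P g h *m B^T.
Proof. by move=> g2 h2; rewrite Emat_trC Emat_mulmxl // trmx_mul -Emat_trC. Qed.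

Lemma Emat_sumr m n (I : finType) (g : T -> 'cV[R]_m) (h : I -> T -> 'cV[R]_n) :
  L2vec P g -> (forall k, L2vec P (h k)) ->
  Emat P g (fun w => \sum_k h k w) = \sum_k Emat P g (h k).
Proof.
move=> g2 h2; rewrite Emat_trC Emat_suml // linear_sum /=.
by apply: eq_bigr => k _; rewrite -Emat_trC.
Qed.

Lemma Emat_subr m n (g : T -> 'cV[R]_m) (h1 h2 : T -> 'cV[R]_n) :
  L2vec P g -> L2vec P h1 -> L2vec P h2 ->
  Emat P g (fun w => h1 w - h2 w) = Emat P g h1 - Emat P g h2.
Proof. by move=> g2 h1_2 h2_2; rewrite Emat_trC Emat_subl // linearB /= -!Emat_trC. Qed.

Lemma mse_mxtrace m (x z : T -> 'cV[R]_m) : L2vec P x -> L2vec P z ->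
  mse P x z = \tr (Emat P (fun w => x w - z w) (fun w => x w - z w)).
Proof.
move=> x2 z2; have xz2 : L2vec P (fun w => x w - z w) by exact: L2vec_sub.
rewrite /mse /mxtrace Ex_sum => [|i]; last first.
  have -> : (fun w => (x w i 0 - z w i 0) ^+ 2) =
            (fun w => (x w - z w) i 0) \* (fun w => (x w - z w) i 0).
    by apply/funext => w; rewrite /= !mxE expr2.
  exact: Lfun2_mul_Lfun1.
apply: eq_bigr => i _; rewrite mxE; congr Ex; apply/funext => w.
by rewrite !mxE expr2.
Qed.

Lemma mse_sum_orthogonal m n (I : finType) (x : T -> 'cV[R]_m)
    (v : I -> T -> 'cV[R]_n) (M : I -> 'M[R]_(m, n)) :
  L2vec P x -> (forall k, L2vec P (v k)) ->
  (forall i j, i != j -> Emat P (v i) (v j) = 0) ->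
  mse P x (fun w => \sum_k M k *m v k w) =
  \tr (Emat P x x) + \sum_k (\tr (M k *m Emat P (v k) (v k) *m (M k)^T)
                             - 2 * \tr (Emat P x (v k) *m (M k)^T)).
Proof.
move=> x2 v2 v_orth.
have Mv2 k : L2vec P (fun w => M k *m v k w) by apply: L2vec_mulmx.
have z2 : L2vec P (fun w => \sum_k M k *m v k w) by apply: L2vec_sum.
have Exz : Emat P x (fun w => \sum_k M k *m v k w) = \sum_k Emat P x (v k) *m (M k)^T.
  by rewrite Emat_sumr //; apply: eq_bigr => k _; rewrite Emat_mulmxr.
have Ezz : Emat P (fun w => \sum_k M k *m v k w) (fun w => \sum_k M k *m v k w)
           = \sum_k M k *m Emat P (v k) (v k) *m (M k)^T.
  rewrite Emat_sumr //; apply: eq_bigr => l _.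
  rewrite Emat_mulmxr // Emat_suml // (bigD1 l) //= big1 ?addr0 ?Emat_mulmxl // => k kl.
  by rewrite Emat_mulmxl // v_orth // mulmx0.
rewrite mse_mxtrace // Emat_subl //; last exact: L2vec_sub.
rewrite !Emat_subr // Ezz.
rewrite [Emat P (fun w => \sum_k M k *m v k w) x]Emat_trC Exz.
by rewrite !mxtraceB mxtrace_tr !mxtrace_sum sumrB -mulr_sumr; lra.
Qed.

Lemma mse_mulmx m n (x : T -> 'cV[R]_m) (g : T -> 'cV[R]_n) (M : 'M[R]_(m, n)) :
  L2vec P x -> L2vec P g ->
  mse P x (fun w => M *m g w) =
  \tr (Emat P x x) + (\tr (M *m Emat P g g *m M^T) - 2 * \tr (Emat P x g *m M^T)).
Proof.
move=> x2 g2.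
have := @mse_sum_orthogonal m n 'I_1 x (fun=> g) (fun=> M) x2 (fun=> g2).
rewrite big_ord1; under eq_fun do rewrite big_ord1.
by apply=> i j; rewrite !ord1 eqxx.
Qed.

End SecondMoments.

Section PseudoInverse.
Context {R : realType}.

Lemma pinv_uniq m n (A : 'M[R]_(m, n)) (B C : 'M[R]_(n, m)) :
  is_pinv A B -> is_pinv A C -> B = C.
Proof.
move=> [ABA [BAB [ABsym BAsym]]] [ACA [CAC [ACsym CAsym]]].
have AT_AC : A^T = A^T *m (A *m C) by rewrite -ACsym -trmx_mul ACA.
have AT_BA : A^T = (B *m A) *m A^T by rewrite -BAsym -trmx_mul mulmxA ABA.
have -> : B = B *m A *m C.
  transitivity (B *m (A *m B)^T); first by rewrite ABsym mulmxA BAB.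
  rewrite trmx_mul {1}AT_AC !mulmxA -(mulmxA B B^T A^T) -trmx_mul ABsym.
  by rewrite mulmxA BAB.
transitivity ((C *m A)^T *m C); last by rewrite CAsym CAC.
rewrite trmx_mul AT_BA -!mulmxA (mulmxA A^T C^T C) -trmx_mul CAsym CAC.
by rewrite mulmxA.
Qed.

Section Symmetric.
Variable n : nat.
Variables S D : 'M[R]_n.
Hypothesis S_sym : S^T = S.
Hypothesis SD_pinv : is_pinv S D.

Lemma pinv_sym : D^T = D.
Proof.
have [SDS [DSD [SDsym DSsym]]] := SD_pinv.
apply: (@pinv_uniq _ _ S D^T D _ SD_pinv); split.
  by have := congr1 trmx SDS; rewrite !trmx_mul S_sym mulmxA.
split; first by have := congr1 trmx DSD; rewrite !trmx_mul S_sym mulmxA.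
have SDT : S *m D^T = D *m S by rewrite -{1}S_sym -trmx_mul DSsym.
have DTS : D^T *m S = S *m D by rewrite -{1}S_sym -trmx_mul SDsym.
by rewrite SDT DTS.
Qed.

Lemma pinv_sym_comm : S *m D = D *m S.
Proof. by have [_ [_ [SDsym _]]] := SD_pinv; rewrite -SDsym trmx_mul pinv_sym S_sym. Qed.

Lemma pinv_sym_mulmxK : D *m D *m S = D.
Proof. by have [_ [DSD _]] := SD_pinv; rewrite -mulmxA -pinv_sym_comm mulmxA. Qed.

Lemma pinv_psd_sqrt_conj E : is_psd_sqrt S E -> D *m E *m D^T = D *m S.
Proof.
move=> [_ [_ <-]]; have [_ [DSD _]] := SD_pinv.
by rewrite pinv_sym -!mulmxA pinv_sym_comm !mulmxA DSD.
Qed.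

End Symmetric.
End PseudoInverse.

Section TruncatedSVD.
Context {R : realType}.

Definition trunc_sv (s : nat -> R) (eta : nat) (i : nat) : R :=
  if (i < eta)%N then s i else 0.

Lemma svd_truncE m n (U : 'M[R]_m) s (V : 'M[R]_n) eta :
  svd_trunc U s V eta = U *m rdiag m n (trunc_sv s eta) *m V^T.
Proof. by []. Qed.

Lemma mxtrace_rdiag_mul m n (s t : nat -> R) :
  \tr (rdiag m n s *m (rdiag m n t)^T) = \sum_(i < minn m n) s i * t i.
Proof.
have diag_entry (i : 'I_m) : (rdiag m n s *m (rdiag m n t)^T) i i =
    if (i < n)%N then s i * t i else 0.
  rewrite mxE -(@big_ord1_eq R 0 +%R (fun=> s i * t i)) [RHS]big_mkcond /=.
  by apply: eq_bigr => j _; rewrite !mxE eq_sym; case: eqP; rewrite ?mulr0.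
rewrite /mxtrace (eq_bigr _ (fun i _ => diag_entry i)) -big_mkcond /=.
rewrite (big_ord_widen m (fun i => s i * t i)) ?geq_minl //.
by apply: eq_bigl => i; rewrite leq_min ltn_ord.
Qed.

Lemma sum_trunc_sv_mul (s t : nat -> R) eta N : (eta <= N)%N ->
  \sum_(i < N) trunc_sv s eta i * t i = \sum_(i < eta) s i * t i.
Proof.
move=> etaN; rewrite (big_ord_widen N (fun i => s i * t i)) // [RHS]big_mkcond /=.
by apply: eq_bigr => i _; rewrite /trunc_sv; case: ifP; rewrite ?mul0r.
Qed.

Lemma mxtrace_orthogonal_conj m (U : 'M[R]_m) (B : 'M[R]_m) :
  orthogonal_mx U -> \tr (U *m B *m U^T) = \tr B.
Proof. by move=> UU; rewrite mxtrace_mulC mulmxA UU mul1mx. Qed.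

Lemma mxtrace_svd_mul m n (U : 'M[R]_m) (V : 'M[R]_n) (s t : nat -> R) :
  orthogonal_mx U -> orthogonal_mx V ->
  \tr (U *m rdiag m n s *m V^T *m (U *m rdiag m n t *m V^T)^T) =
  \sum_(i < minn m n) s i * t i.
Proof.
move=> UU VV; rewrite !trmx_mul !trmxK -!mulmxA (mulmxA V^T V) VV mul1mx.
by rewrite !mulmxA -(mulmxA U) mxtrace_orthogonal_conj // mxtrace_rdiag_mul.
Qed.

Lemma rdiag_trunc_sv m n (s : nat -> R) eta :
  rdiag m n (trunc_sv s eta) = rdiag m m (trunc_sv (fun=> 1) eta) *m rdiag m n s.
Proof.
have -> : rdiag m m (trunc_sv (fun=> 1) eta) = diag_mx (\row_(i < m) trunc_sv (fun=> 1) eta i).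
  by apply/matrixP => i j; rewrite !mxE -[(i == j :> nat)]/(i == j); case: eqP.
apply/matrixP => i j; rewrite mul_diag_mx !mxE /trunc_sv.
by case: ifP; case: ifP; rewrite ?mul1r ?mul0r.
Qed.

Lemma svd_trunc_lmulmx m n (A : 'M[R]_(m, n)) U s V eta : is_svd A U s V ->
  svd_trunc U s V eta = U *m rdiag m m (trunc_sv (fun=> 1) eta) *m U^T *m A.
Proof.
move=> [UU [_ [_ [_ ->]]]].
by rewrite svd_truncE rdiag_trunc_sv -!mulmxA (mulmxA U^T) UU mul1mx.
Qed.

Lemma mxtrace_svd_trunc_mul m n (A : 'M[R]_(m, n)) U s V eta :
  (eta <= minn m n)%N -> is_svd A U s V ->
  \tr (svd_trunc U s V eta *m A^T) = \sum_(0 <= j < eta) s j ^+ 2.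
Proof.
move=> eta_le [UU [VV [_ [_ ->]]]].
rewrite svd_truncE mxtrace_svd_mul // sum_trunc_sv_mul // big_mkord.
by apply: eq_bigr => i _; rewrite expr2.
Qed.

Lemma mxtrace_svd_trunc_sqr m n (U : 'M[R]_m) s (V : 'M[R]_n) eta :
  (eta <= minn m n)%N -> orthogonal_mx U -> orthogonal_mx V ->
  \tr (svd_trunc U s V eta *m (svd_trunc U s V eta)^T) = \sum_(0 <= j < eta) s j ^+ 2.
Proof.
move=> eta_le UU VV; rewrite !svd_truncE mxtrace_svd_mul // sum_trunc_sv_mul // big_mkord.
by apply: eq_bigr => i _; rewrite /trunc_sv ltn_ord expr2.
Qed.

Lemma svd_trunc_error m n (X : 'M[R]_(m, n)) (E S D : 'M[R]_n) (U : 'M[R]_m) s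
    (V : 'M[R]_n) eta :
  (eta <= minn m n)%N -> is_psd_sqrt S E -> is_pinv S D -> is_svd (X *m D) U s V ->
  \tr (svd_trunc U s V eta *m D *m E *m (svd_trunc U s V eta *m D)^T)
    - 2 * \tr (X *m (svd_trunc U s V eta *m D)^T) = - \sum_(0 <= j < eta) s j ^+ 2.
Proof.
move=> eta_le SE SD svd; have [S_sym _] := SE; have [UU [VV _]] := svd.
set G := svd_trunc U s V eta.
have GDS : G *m (D *m S) = G.
  rewrite /G (svd_trunc_lmulmx eta svd) -!mulmxA.
  by rewrite (mulmxA D) pinv_sym_mulmxK.
have -> : G *m D *m E *m (G *m D)^T = G *m G^T.
  rewrite trmx_mul -(mulmxA G) -(mulmxA G) (mulmxA (D *m E)).
  by rewrite (pinv_psd_sqrt_conj S_sym SD SE) mulmxA GDS.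
have -> : X *m (G *m D)^T = (G *m (X *m D)^T)^T.
  by rewrite [(G *m D)^T]trmx_mul [RHS]trmx_mul trmxK (pinv_sym S_sym SD) mulmxA.
rewrite mxtrace_tr mxtrace_svd_trunc_sqr // mxtrace_svd_trunc_mul //; lra.
Qed.

End TruncatedSVD.

Theorem corollary5 (d : measure_display) (T : measurableType d) (R : realType)
  (P : probability T R) (m n p : nat) (hp : (0 < p)%N)
  (x : T -> 'cV[R]_m) (y : T -> 'cV[R]_n) (v : 'I_p -> T -> 'cV[R]_n)
  (eta : 'I_p -> nat)
  (S Sd : 'I_p -> 'M[R]_n) (U : 'I_p -> 'M[R]_m) (s : 'I_p -> nat -> R)
  (V : 'I_p -> 'M[R]_n) :
  L2vec P x -> zero_mean P x ->
  L2vec P y -> zero_mean P y ->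
  v (Ordinal hp) = y ->
  (forall k, L2vec P (v k)) -> (forall k, zero_mean P (v k)) ->
  (forall i j, i != j -> Emat P (v i) (v j) = 0) ->
  (\sum_(k < p) eta k <= minn m n)%N ->
  (forall k, is_psd_sqrt (S k) (Emat P (v k) (v k))) ->
  (forall k, is_pinv (S k) (Sd k)) ->
  (forall k, is_svd (Emat P x (v k) *m Sd k) (U k) (s k) (V k)) ->
  let G k := svd_trunc (U k) (s k) (V k) (eta k) in
  let k1 := Ordinal hp in
  mse P x (fun w => \sum_(k < p) G k *m Sd k *m v k w)
  = mse P x (fun w => G k1 *m Sd k1 *m y w)
    - \sum_(k < p | k != k1) \sum_(0 <= j < eta k) s k j ^+ 2.
Proof.
(* [Emat] is a second moment. *)
move=> x2 _ _ _ v1_y v2 _ v_orth eta_sum sqrt_S pinv_Sd svd_k G k1.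
have branch k :
    \tr (G k *m Sd k *m Emat P (v k) (v k) *m (G k *m Sd k)^T)
      - 2 * \tr (Emat P x (v k) *m (G k *m Sd k)^T)
    = - \sum_(0 <= j < eta k) s k j ^+ 2.
  apply: svd_trunc_error => //.
  by apply: leq_trans eta_sum; rewrite (bigD1 k) //= leq_addr.
rewrite mse_sum_orthogonal // -v1_y mse_mulmx // (eq_bigr _ (fun k _ => branch k)).
by rewrite branch (bigD1 k1) //= sumrN; lra.
Qed.
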